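(* Let $(L,\nu,\tau)$ be a Šerstnev random normed space whose triangle function $\tau$ is sup-continuous and satisfies $$\tau(F,G)(x)\ \ge\ \sup_{t\in[0,1]}\min\{F(tx),G((1-t)x)\}\qquad\text{for all }x\ge0,\ F,G\in D^+ .$$ Then the family $P_{fc}(L)$ of all nonempty closed convex subsets of $L$ is closed in $P_f(L)$ with respect to the probabilistic Pompeiu–Hausdorff metric $H$; hence $P_{fc}(L)$ is complete with respect to $H$ if $L$ is complete. Moreover, if $L$ is complete, the family $P_{kc}(L)$ of all nonempty compact convex subsets of $L$ is complete with respect to $H$.
   Context: $\Delta^+$ is the set of functions $F:[-\infty,\infty]\to[0,1]$ that are nondecreasing, left-continuous on $\mathbb R$, with $F(-\infty)=0$, $F(\infty)=1$, $F(0)=0$; ordered pointwise; $D^+=\{F\in\Delta^+:\lim_{x\to\infty}F(x)=1\}$; $\epsilon_0(x)=0$ for $x\le0$, $=1$ for $x>0$. Infimum of $\{F_i\}$ in $\Delta^+$: $G(x)=\sup_{x'<x}\inf_iF_i(x')$; supremum pointwise. A triangle function is $\tau:\Delta^+\times\Delta^+\to\Delta^+$ commutative, associative, nondecreasing in each argument, with $\tau(F,\epsilon_0)=F$, continuous for weak convergence. A Šerstnev random normed space $(L,\nu,\tau)$: $L$ a real vector space, $\tau$ a continuous triangle function with $\tau(D^+\times D^+)\subset D^+$, $\nu:L\to D^+$ with $\nu(p)=\epsilon_0\iff p=0$; $\nu(ap)(x)=\nu(p)(x/|a|)$ for $x\ge0$, $a\ne0$; $\nu(p+q)\ge\tau(\nu(p),\nu(q))$.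 It is a probabilistic metric space with $F_{pq}=\nu(p-q)$, topologized by the strong topology with neighborhood base $U_t(p)=\{q:F_{pq}(t)>1-t\}$, $t>0$; completeness and compactness refer to it. $\tau$ is sup-continuous if $\tau(\sup_iF_i,G)=\sup_i\tau(F_i,G)$ for every family $\{F_i\}\subset\Delta^+$, $G\in\Delta^+$. For nonempty $A,B\subset L$: $F_{pB}(x)=\sup_{q\in B}F_{pq}(x)$, $\Gamma^*_{AB}(x)=\inf_{p\in A}F_{pB}(x)$, $F^*_{AB}(x)=\sup_{x'<x}\Gamma^*_{AB}(x')$, $H(A,B)=F_{AB}=\min\{F^*_{AB},F^*_{BA}\}$. $P_f(L)$ is the family of nonempty closed subsets; $A_n\to A$ with respect to $H$ iff for every $t>0$, $F_{A_nA}(t)>1-t$ for all large $n$, and Cauchy sequences/completeness for $H$ are defined analogously; a subfamily is closed in $P_f(L)$ if it contains the $H$-limits in $P_f(L)$ of its convergent sequences. *)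

From HB Require Import structures.
From mathcomp Require Import all_boot all_order all_algebra.
From mathcomp Require Import all_classical all_reals all_analysis.
Set Implicit Arguments. Unset Strict Implicit. Unset Printing Implicit Defensive.
Import Order.TTheory GRing.Theory Num.Theory numFieldNormedType.Exports.
Local Open Scope classical_set_scope.
Local Open Scope ring_scope.

(* A distance distribution function F : [-oo,oo] -> [0,1] is represented by its
   restriction to the real line; the values F(-oo)=0 and F(+oo)=1 are fixed by
   convention and carry no information. *)
Section Defs.
Variable R : realType.
Notation dfun := (R -> R).

Definition Deltap (F : dfun) : Prop :=
  [/\ (forall x, 0 <= F x <= 1),
      (forall x y, x <= y -> F x <= F y),
      (forall x, F y @[y --> x^'-] --> F x) &
      F 0 = 0].

Definition Dplus (F : dfun) : Prop := Deltap F /\ F x @[x --> +oo] --> (1 : R).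

Definition eps0 : dfun := fun x => if 0 < x then 1 else 0.

Definition dle (F G : dfun) : Prop := forall x, F x <= G x.

Definition weak_cvg (Fn : nat -> dfun) (F : dfun) : Prop :=
  forall x, {for x, continuous F} -> Fn n x @[n --> \oo] --> F x.

Definition triangle_function (tau : dfun -> dfun -> dfun) : Prop :=
  [/\ (forall F G, Deltap F -> Deltap G -> Deltap (tau F G)),
      (forall F G, Deltap F -> Deltap G -> forall x, tau F G x = tau G F x),
      (forall F G K, Deltap F -> Deltap G -> Deltap K ->
          forall x, tau F (tau G K) x = tau (tau F G) K x),
      (forall F G K, Deltap F -> Deltap G -> Deltap K -> dle F G ->
          dle (tau F K) (tau G K) /\ dle (tau K F) (tau K G)) &
      (forall F, Deltap F -> forall x, tau F eps0 x = F x)].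

Definition tau_continuous (tau : dfun -> dfun -> dfun) : Prop :=
  forall (Fn Gn : nat -> dfun) (F G : dfun),
    (forall n, Deltap (Fn n)) -> (forall n, Deltap (Gn n)) -> Deltap F -> Deltap G ->
    weak_cvg Fn F -> weak_cvg Gn G ->
    weak_cvg (fun n => tau (Fn n) (Gn n)) (tau F G).

(* supremum in Delta^+ is pointwise *)
Definition sup_continuous (tau : dfun -> dfun -> dfun) : Prop :=
  forall (I : Type) (F : I -> dfun) (G : dfun),
    (forall i, Deltap (F i)) -> Deltap G ->
    forall x, tau (fun y => sup [set F i y | i in [set: I]]) G x
              = sup [set tau (F i) G x | i in [set: I]].

Variable L : lmodType R.

Definition serstnev_RNS (nu : L -> dfun) (tau : dfun -> dfun -> dfun) : Prop :=
  [/\ triangle_function tau, tau_continuous tau,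
      (forall F G, Dplus F -> Dplus G -> Dplus (tau F G)) &
   [/\ (forall p, Dplus (nu p)),
      (forall p, (forall x, nu p x = eps0 x) <-> p = 0),
      (forall (a : R) p x, a != 0 -> 0 <= x -> nu (a *: p) x = nu p (x / `|a|)) &
      (forall p q, dle (tau (nu p) (nu q)) (nu (p + q)))]].

Variable nu : L -> dfun.

Definition Fpq (p q : L) : dfun := nu (p - q).

Definition Unbh (t : R) (p : L) : set L := [set q | 1 - t < Fpq p q t].

Definition s_open (O : set L) : Prop :=
  forall p, O p -> exists2 t, 0 < t & Unbh t p `<=` O.

Definition s_closed (A : set L) : Prop :=
  forall p, (forall t, 0 < t -> exists2 q, A q & Unbh t p q) -> A p.

Definition s_compact (K : set L) : Prop :=
  forall (I : Type) (O : I -> set L), (forall i, s_open (O i)) ->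
    (forall p, K p -> exists i, O i p) ->
    exists (n : nat) (f : 'I_n -> I), forall p, K p -> exists k, O (f k) p.

Definition s_cvg (u : nat -> L) (p : L) : Prop :=
  forall t, 0 < t -> exists N, forall n, (N <= n)%N -> Unbh t p (u n).

Definition s_cauchy (u : nat -> L) : Prop :=
  forall t, 0 < t -> exists N, forall m n, (N <= m)%N -> (N <= n)%N ->
    1 - t < Fpq (u m) (u n) t.

Definition s_complete : Prop :=
  forall u, s_cauchy u -> exists p, s_cvg u p.

Definition convex (A : set L) : Prop :=
  forall p q (l : R), A p -> A q -> 0 <= l <= 1 -> A (l *: p + (1 - l) *: q).

Definition FpB (p : L) (B : set L) : dfun :=
  fun x => sup [set Fpq p q x | q in B].
Definition GammaStar (A B : set L) : dfun :=
  fun x => inf [set FpB p B x | p in A].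
Definition FStar (A B : set L) : dfun :=
  fun x => sup [set GammaStar A B x' | x' in [set x' | x' < x]].
Definition H (A B : set L) : dfun :=
  fun x => Num.min (FStar A B x) (FStar B A x).

Definition Pf (A : set L) : Prop := A !=set0 /\ s_closed A.
Definition Pfc (A : set L) : Prop := Pf A /\ convex A.
Definition Pkc (A : set L) : Prop := [/\ A !=set0, s_compact A & convex A].

Definition H_cvg (An : nat -> set L) (A : set L) : Prop :=
  forall t, 0 < t -> exists N, forall n, (N <= n)%N -> 1 - t < H (An n) A t.

Definition H_cauchy (An : nat -> set L) : Prop :=
  forall t, 0 < t -> exists N, forall m n, (N <= m)%N -> (N <= n)%N ->
    1 - t < H (An m) (An n) t.

Definition H_closed_in_Pf (fam : set L -> Prop) : Prop :=
  forall An A, (forall n, fam (An n)) -> Pf A -> H_cvg An A -> fam A.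

Definition H_complete (fam : set L -> Prop) : Prop :=
  forall An, (forall n, fam (An n)) -> H_cauchy An -> exists2 A, fam A & H_cvg An A.

End Defs.

From HB Require Import structures.
From mathcomp Require Import all_boot all_order all_algebra.
From mathcomp Require Import all_classical all_reals all_analysis.
From mathcomp Require Import lra.
Import Order.TTheory GRing.Theory Num.Theory.
Local Open Scope classical_set_scope.
Local Open Scope ring_scope.

Set Implicit Arguments.
Unset Strict Implicit.
Unset Printing Implicit Defensive.

(* The lower bound on tau yields the Menger inequality
   min (nu p x) (nu q y) <= nu (p + q) (x + y), so the neighbourhoods U_t behave
   like balls of radius t: they compose additively in the radius and are stable
   under convex combinations.  A convex combination of points of an H-limit A is
   then approximated by the same combination of nearby points of a convex A_n,
   which gives closedness of P_fc.  An H-Cauchy sequence converges to its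
   Kuratowski lower limit: along a subsequence whose H-distances decrease
   geometrically, every point of A_n starts a Cauchy chain of points of later
   A_m, and the limit of that chain lies in the lower limit.  Compactness passes
   to the limit because H-limits of totally bounded sets are totally bounded and
   closed totally bounded subsets of a complete space are compact. *)

Lemma chain_from (T : Type) (P : nat -> T -> Prop) (Q : nat -> T -> T -> Prop) a :
  P 0%N a -> (forall i x, P i x -> exists y, P i.+1 y /\ Q i x y) ->
  exists c : nat -> T, c 0%N = a /\ forall i, P i (c i) /\ Q i (c i) (c i.+1).
Proof.
move=> Pa step.
have : forall ix : nat * T, exists y, P ix.1 ix.2 -> P ix.1.+1 y /\ Q ix.1 ix.2 y.
  move=> [i x] /=; have [/step[y hy]|nPx] := pselect (P i x); first by exists y.
  by exists x => /nPx.
case/choice => g hg.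
pose c := fix c i := if i is i'.+1 then g (i', c i') else a.
have Pc i : P i (c i) by elim: i => [|i /(hg (i, c i))[]].
by exists c; split=> // i; split; last case: (hg (i, c i) (Pc i)).
Qed.

Section Bounds01.
Variable R : realType.

Lemma sup_in01 (S : set R) : (forall y, S y -> 0 <= y <= 1) -> 0 <= sup S <= 1.
Proof.
move=> S01; have [->|/set0P[y Sy]] := eqVneq S set0; first by rewrite sup0 lexx ler01.
have ubS : has_ubound S by exists 1 => z /S01 /andP[].
apply/andP; split; first by apply: le_trans (ub_le_sup ubS Sy); case/andP: (S01 y Sy).
by apply: ge_sup; [exists y | move=> z /S01 /andP[]].
Qed.

Lemma inf_in01 (S : set R) : (forall y, S y -> 0 <= y <= 1) -> 0 <= inf S <= 1.
Proof.
move=> S01; have [->|/set0P[y Sy]] := eqVneq S set0; first by rewrite inf0 lexx ler01.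
have lbS : has_lbound S by exists 0 => z /S01 /andP[].
apply/andP; split; first by apply: lb_le_inf; [exists y | move=> z /S01 /andP[]].
by apply: le_trans (ge_inf lbS Sy) _; case/andP: (S01 y Sy).
Qed.

End Bounds01.

Section MengerSpace.
Variables (R : realType) (L : lmodType R) (nu : L -> R -> R).
Hypothesis nu_range : forall p x, 0 <= nu p x <= 1.
Hypothesis nu_homo : forall p, {homo nu p : x y / x <= y}.
Hypothesis nu0 : forall x, 0 < x -> nu 0 x = 1.
Hypothesis nu_scale :
  forall a p x, a != 0 -> 0 <= x -> nu (a *: p) x = nu p (x / `|a|).
Hypothesis nu_add : forall p q x y, 0 < x -> 0 < y ->
  Num.min (nu p x) (nu q y) <= nu (p + q) (x + y).

Local Notation U := (Unbh nu).

Definition halfpow (k : nat) : R := 2 ^- k.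

Lemma halfpow_gt0 k : 0 < halfpow k.
Proof. by rewrite /halfpow invr_gt0 exprn_gt0. Qed.

Lemma halfpowS k : halfpow k.+1 = halfpow k / 2.
Proof. by rewrite /halfpow exprS invfM mulrC. Qed.

Lemma halfpow_le k j : (k <= j)%N -> halfpow j <= halfpow k.
Proof.
elim: j => [|j IH]; first by rewrite leqn0 => /eqP ->.
rewrite leq_eqVlt => /orP[/eqP -> //|]; rewrite ltnS => /IH hkj.
by rewrite halfpowS; have := halfpow_gt0 j; lra.
Qed.

Lemma halfpow_lt t : 0 < t -> exists k, halfpow k < t.
Proof.
move=> t0; exists (Num.Def.archi_bound t^-1).
rewrite /halfpow -[X in _ < X](invrK t) ltf_pV2 ?posrE ?exprn_gt0 ?invr_gt0 //.
exact: upper_nthrootP.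
Qed.

Lemma Unbh_refl s p : 0 < s -> U s p p.
Proof. by move=> s0; rewrite /Unbh /Fpq /= subrr nu0 // ltrBlDr ltrDl. Qed.

Lemma Unbh_sym s p q : 0 <= s -> U s p q -> U s q p.
Proof.
rewrite /Unbh /Fpq /= => s0.
have -> : p - q = (-1) *: (q - p) by rewrite scaleN1r opprB.
by rewrite nu_scale ?oppr_eq0 ?oner_eq0 // normrN normr1 divr1.
Qed.

Lemma Unbh_le s s' p q : s <= s' -> U s p q -> U s' p q.
Proof.
rewrite /Unbh /Fpq /= => ss' hpq.
by apply: le_lt_trans (lt_le_trans hpq (nu_homo _ ss')); lra.
Qed.

Lemma Unbh_trans s s' p q r : 0 < s -> 0 < s' -> U s p q -> U s' q r -> U (s + s') p r.
Proof.
rewrite /Unbh /Fpq /= => s0 s'0 hpq hqr.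
have -> : p - r = (p - q) + (q - r) by rewrite addrA subrK.
apply: lt_le_trans (nu_add _ _ s0 s'0); rewrite lt_min.
by apply/andP; split; [apply: le_lt_trans hpq | apply: le_lt_trans hqr]; lra.
Qed.

Lemma Unbh_trans_half t p q r : 0 < t -> U (t / 2) p q -> U (t / 2) q r -> U t p r.
Proof.
move=> t0 hpq hqr; have t2 : 0 < t / 2 by lra.
by apply: Unbh_le (Unbh_trans t2 t2 hpq hqr); lra.
Qed.

(* Both differences are split with the weights l and 1 - l of the combination. *)
Lemma Unbh_convex s l p p' q q' : 0 < s -> 0 <= l <= 1 -> U s p p' -> U s q q' ->
  U s (l *: p + (1 - l) *: q) (l *: p' + (1 - l) *: q').
Proof.
move=> s0 /andP[l0 l1] hp hq.
have [->|ln0] := eqVneq l 0; first by rewrite !scale0r !add0r subr0 !scale1r.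
have [->|ln1] := eqVneq l 1; first by rewrite !scale1r subrr !scale0r !addr0.
have lp : 0 < l by rewrite lt_neqAle eq_sym ln0.
have lp' : 0 < 1 - l by rewrite subr_gt0 lt_neqAle ln1.
rewrite /Unbh /Fpq /=.
have -> : l *: p + (1 - l) *: q - (l *: p' + (1 - l) *: q') =
    l *: (p - p') + (1 - l) *: (q - q').
  by rewrite !scalerBr opprD !addrA; congr (_ + _); rewrite addrAC.
have sE : s = l * s + (1 - l) * s by rewrite -mulrDl addrC subrK mul1r.
rewrite [X in nu _ X]sE.
apply: lt_le_trans (nu_add _ _ (mulr_gt0 lp s0) (mulr_gt0 lp' s0)).
rewrite !nu_scale ?gt_eqF ?mulr_ge0 ?ltW // !gtr0_norm // ![_ * s]mulrC !mulfK ?gt_eqF //.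
by rewrite lt_min hp hq.
Qed.

Lemma FpB_in01 p B x : 0 <= FpB nu p B x <= 1.
Proof. by apply: sup_in01 => _ [q _ <-]; apply: nu_range. Qed.

Lemma GammaStar_in01 A B x : 0 <= GammaStar nu A B x <= 1.
Proof. by apply: inf_in01 => _ [p _ <-]; apply: FpB_in01. Qed.

Lemma H_gt A B t :
  1 - t < H nu A B t <-> 1 - t < FStar nu A B t /\ 1 - t < FStar nu B A t.
Proof. by rewrite /H lt_min; split=> [/andP[] | [-> ->]]. Qed.

Lemma FStar_gt_Unbh A B t p : B !=set0 -> 1 - t < FStar nu A B t -> A p ->
  exists2 q, B q & U t p q.
Proof.
move=> [q0 Bq0] hAB Ap.
have Gne : [set GammaStar nu A B x | x in [set x | x < t]] !=set0.
  by exists (GammaStar nu A B (t - 1)), (t - 1) => //=; lra.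
have [_ [x xt <-] hG] := sup_gt Gne hAB.
have hF : 1 - t < FpB nu p B x.
  apply: lt_le_trans hG (ge_inf _ _); last by exists p.
  by exists 0 => _ [r _ <-]; case/andP: (FpB_in01 r B x).
have Fne : [set Fpq nu p q x | q in B] !=set0 by exists (Fpq nu p q0 x), q0.
have [_ [q Bq <-] hq] := sup_gt Fne hF.
by exists q => //; apply: lt_le_trans hq (nu_homo _ (ltW xt)).
Qed.

Lemma FStar_gt_of_Unbh A B t : 0 < t -> A !=set0 ->
  (forall p, A p -> exists2 q, B q & U (t / 2) p q) -> 1 - t < FStar nu A B t.
Proof.
move=> t0 [p0 Ap0] AB.
have hG : 1 - t / 2 <= GammaStar nu A B (t / 2).
  apply: lb_le_inf; first by exists (FpB nu p0 B (t / 2)), p0.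
  move=> _ [p Ap <-]; have [q Bq hq] := AB p Ap.
  apply: le_trans (ltW hq) (ub_le_sup _ _); last by exists q.
  by exists 1 => _ [r _ <-]; case/andP: (nu_range (p - r) (t / 2)).
have hF : GammaStar nu A B (t / 2) <= FStar nu A B t.
  apply: ub_le_sup; last by exists (t / 2) => //=; lra.
  by exists 1 => _ [x _ <-]; case/andP: (GammaStar_in01 A B x).
by apply: lt_le_trans (le_trans hG hF); lra.
Qed.

Lemma Pfc_H_closed : H_closed_in_Pf nu (Pfc nu).
Proof.
move=> An A PAn [A0 Acl] AnA; split=> // p q l Ap Aq l01; apply: Acl => t t0.
have t2 : 0 < t / 2 by lra.
have [N hN] := AnA (t / 2) t2; have /H_gt[hNA hAN] := hN N (leqnn N).
have [[AN0 _] ANconv] := PAn N.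
have [p' ANp' hp] := FStar_gt_Unbh AN0 hAN Ap.
have [q' ANq' hq] := FStar_gt_Unbh AN0 hAN Aq.
have [a Aa ha] := FStar_gt_Unbh A0 hNA (ANconv _ _ _ ANp' ANq' l01).
by exists a => //; apply: Unbh_trans_half (Unbh_convex t2 l01 hp hq) ha.
Qed.

Lemma Unbh_geometric_chain k (c : nat -> L) :
  (forall i, U (halfpow (k + i).+1) (c i) (c i.+1)) ->
  forall i j, (i <= j)%N -> U (halfpow (k + i)) (c i) (c j).
Proof.
move=> step.
have partial m i :
    U (halfpow (k + i) - halfpow (k + i + m).+1) (c i) (c (i + m).+1).
  elim: m i => [|m IH] i.
    by rewrite !addn0; apply: Unbh_le (step i); rewrite halfpowS; lra.
  have hm := IH i.+1; rewrite !addnS !addSn in hm *.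
  have pos : 0 < halfpow (k + i).+1 - halfpow (k + i + m).+2 :> R.
    have := halfpow_le (leq_addr m (k + i).+2).
    rewrite !addSn (halfpowS (k + i).+1).
    by have := halfpow_gt0 (k + i).+1; lra.
  apply: Unbh_le (Unbh_trans (halfpow_gt0 _) pos (step i) hm).
  by rewrite [halfpow (k + i).+1]halfpowS; lra.
move=> i j; rewrite leq_eqVlt => /orP[/eqP <-|/subnKC <-].
  exact: Unbh_refl (halfpow_gt0 _).
rewrite addSn; apply: Unbh_le (partial _ i).
by have := halfpow_gt0 (k + i + (j - i.+1)).+1; lra.
Qed.

Lemma s_cauchy_halfpow (c : nat -> L) :
  (forall i j, (i <= j)%N -> U (halfpow i) (c i) (c j)) -> s_cauchy nu c.
Proof.
move=> hc t t0; have [k hk] : exists k, halfpow k < t / 2 by apply: halfpow_lt; lra.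
exists k => m n km kn; have ek := halfpow_gt0 k.
have := Unbh_trans ek ek (Unbh_sym (ltW ek) (hc _ _ km)) (hc _ _ kn).
by apply: Unbh_le; lra.
Qed.

Definition lower_limit (An : nat -> set L) : set L :=
  [set p | forall t, 0 < t ->
     exists N, forall n, (N <= n)%N -> exists2 a, An n a & U t p a].

Lemma lower_limit_closed An : s_closed nu (lower_limit An).
Proof.
move=> p hp t t0; have t2 : 0 < t / 2 by lra.
have [q hq hpq] := hp _ t2; have [N hN] := hq _ t2.
by exists N => n /hN[a Ana hqa]; exists a => //; apply: Unbh_trans_half t0 hpq hqa.
Qed.

Lemma lower_limit_convex An : (forall n, convex (An n)) -> convex (lower_limit An).
Proof.
move=> An_conv p q l hp hq l01 t t0.
have [N1 h1] := hp t t0; have [N2 h2] := hq t t0.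
exists (maxn N1 N2) => n hn.
have [a Ana ha] := h1 n (leq_trans (leq_maxl _ _) hn).
have [b Anb hb] := h2 n (leq_trans (leq_maxr _ _) hn).
by exists (l *: a + (1 - l) *: b); [apply: An_conv | apply: Unbh_convex].
Qed.

Section CauchyLimit.
Variables (An : nat -> set L) (M : nat -> nat).
Hypothesis complete : s_complete nu.
Hypothesis M_homo : {homo M : i j / (i <= j)%N}.
Hypothesis M_step : forall j m n, (M j <= m)%N -> (M j <= n)%N ->
  forall p, An m p -> exists2 q, An n q & U (halfpow j.+1) p q.

Lemma lower_limit_near k a : An (M k) a ->
  exists2 p, lower_limit An p & U (2 * halfpow k) a p.
Proof.
move=> Aa.
have [c [c0 hc]] : exists c : nat -> L, c 0%N = a /\ forall i,
    An (M (k + i)) (c i) /\ U (halfpow (k + i).+1) (c i) (c i.+1).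
  apply: (@chain_from _ (fun i x => An (M (k + i)) x)
    (fun i x y => U (halfpow (k + i).+1) x y)) => [|i x Ax].
    by rewrite addn0.
  rewrite addnS.
  have [y Ay hxy] := M_step (leqnn _) (M_homo (leqnSn _)) Ax.
  by exists y.
have cc := Unbh_geometric_chain (fun i => (hc i).2).
have [p cp] := complete (s_cauchy_halfpow (fun i j ij =>
  Unbh_le (halfpow_le (leq_addl k i)) (cc i j ij))).
exists p.
  move=> t t0; have t2 : 0 < t / 2 by lra.
  have [N hN] := cp _ t2; have [j hj] := halfpow_lt t2.
  pose i := maxn N j; exists (M (k + i)) => n hn.
  have [b Anb hb] := M_step (leqnn _) hn (hc i).1.
  exists b => //; apply: Unbh_trans_half t0 (hN i (leq_maxl _ _)) (Unbh_le _ hb).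
  have : (j <= (k + i).+1)%N by rewrite ltnW // ltnS (leq_trans (leq_maxr N j)) ?leq_addl.
  by move/halfpow_le; lra.
have [N hN] := cp _ (halfpow_gt0 k).
have := Unbh_trans (halfpow_gt0 _) (halfpow_gt0 _) (cc 0 N (leq0n N))
  (Unbh_sym (ltW (halfpow_gt0 k)) (hN N (leqnn N))).
by rewrite addn0 c0; apply: Unbh_le; lra.
Qed.

Lemma lower_limit_H_cvg : (forall n, An n !=set0) -> H_cvg nu An (lower_limit An).
Proof.
move=> An0 t t0.
have [k hk] : exists k, halfpow k < t / 8 by apply: halfpow_lt; lra.
have ek := halfpow_gt0 k; have ek1 := halfpow_gt0 k.+1; have ek2 : 0 < 2 * halfpow k by lra.
have ekS := halfpowS k.
exists (M k) => n hn; apply/H_gt; split.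
  apply: FStar_gt_of_Unbh t0 (An0 n) _ => b Anb.
  have [a Aa hba] := M_step hn (leqnn _) Anb.
  have [p Ap hap] := lower_limit_near Aa.
  by exists p => //; apply: Unbh_le (Unbh_trans ek1 ek2 hba hap); lra.
have [a0 Aa0] := An0 (M 0%N); have [p0 Ap0 _] := lower_limit_near Aa0.
apply: FStar_gt_of_Unbh t0 (ex_intro _ p0 Ap0) _ => p Ap.
have [N hN] := Ap _ ek.
have [a Ana hpa] := hN (maxn N (M k)) (leq_maxl _ _).
have [b Anb hab] := M_step (leq_maxr _ _) hn Ana.
by exists b => //; apply: Unbh_le (Unbh_trans ek ek1 hpa hab); lra.
Qed.

End CauchyLimit.

Lemma H_cauchy_modulus An : (forall n, An n !=set0) -> H_cauchy nu An ->
  exists M : nat -> nat, {homo M : i j / (i <= j)%N} /\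
    forall j m n, (M j <= m)%N -> (M j <= n)%N ->
      forall p, An m p -> exists2 q, An n q & U (halfpow j.+1) p q.
Proof.
move=> An0 AnC.
have [N hN] := choice (fun j => AnC _ (halfpow_gt0 j.+1)).
pose M := fix M j := if j is j'.+1 then maxn (M j') (N j) else N 0%N.
have NM j : (N j <= M j)%N by case: j => [|j] //=; apply: leq_maxr.
exists M; split.
  by apply: (homo_leq (r := leq)) => [//|y x z|j]; [apply: leq_trans | apply: leq_maxl].
move=> j m n jm jn p Amp.
have /H_gt[hmn _] := hN j m n (leq_trans (NM j) jm) (leq_trans (NM j) jn).
exact: FStar_gt_Unbh (An0 n) hmn Amp.
Qed.

Lemma lower_limit_H_limit An : s_complete nu -> (forall n, An n !=set0) ->
  H_cauchy nu An -> lower_limit An !=set0 /\ H_cvg nu An (lower_limit An).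
Proof.
move=> complete An0 AnC; have [M [M_homo M_step]] := H_cauchy_modulus An0 AnC.
split; last exact: lower_limit_H_cvg complete M_homo M_step An0.
have [a Aa] := An0 (M 0%N).
by have [p Ap _] := lower_limit_near complete M_homo M_step Aa; exists p.
Qed.

Lemma Pfc_H_complete : s_complete nu -> H_complete nu (Pfc nu).
Proof.
move=> complete An PAn AnC.
have [A0 AnA] := lower_limit_H_limit complete (fun n => (PAn n).1.1) AnC.
exists (lower_limit An) => //; split; first by split=> //; apply: lower_limit_closed.
by apply: lower_limit_convex => n; case: (PAn n).
Qed.

Definition finitely_covered (I : Type) (O : I -> set L) (S : set L) :=
  exists n (f : 'I_n -> I), forall p, S p -> exists k, O (f k) p.

Definition totally_bounded (A : set L) :=
  forall s, 0 < s -> exists n (f : 'I_n -> L), forall p, A p -> exists k, U s (f k) p.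

Lemma s_compact_totally_bounded K : s_compact nu K -> totally_bounded K.
Proof.
move=> Kcomp s s0.
pose O q := [set y | exists2 r, 0 < r & U r y `<=` U s q].
have Oopen q : s_open nu (O q).
  move=> y [r r0 hr]; have r2 : 0 < r / 2 by lra.
  exists (r / 2) => // z hyz; exists (r / 2) => // w hzw.
  by apply: hr; apply: Unbh_trans_half r0 hyz hzw.
have cover p : K p -> exists q, O q p by move=> _; exists p, s.
have [n [f hf]] := Kcomp L O Oopen cover.
exists n, f => p /hf[k [r r0 hr]]; exists k.
exact: hr _ (Unbh_refl p r0).
Qed.

Lemma H_cvg_totally_bounded An A : (forall n, totally_bounded (An n)) ->
  (forall n, An n !=set0) -> H_cvg nu An A -> totally_bounded A.
Proof.
move=> Antb An0 AnA s s0; have s2 : 0 < s / 2 by lra.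
have [N hN] := AnA _ s2; have /H_gt[_ hAN] := hN N (leqnn N).
have [n [f hf]] := Antb N _ s2.
exists n, f => p Ap; have [a ANa hpa] := FStar_gt_Unbh (An0 N) hAN Ap.
have [k hk] := hf a ANa; exists k.
by apply: Unbh_le (Unbh_trans s2 s2 hk (Unbh_sym (ltW s2) hpa)); lra.
Qed.

Section Covering.
Variables (I : Type) (O : I -> set L).

Lemma finitely_covered_sub S T : S `<=` T -> finitely_covered O T -> finitely_covered O S.
Proof. by move=> ST [n [f hf]]; exists n, f => p /ST /hf. Qed.

Lemma finitely_covered_neq0 S : ~ finitely_covered O S -> S !=set0.
Proof.
move=> nS; apply: contrapT => S0; apply: nS.
exists 0%N, (fun k : 'I_0 => False_rect I (notF (ltn_ord k))).
by move=> p Sp; exfalso; apply: S0; exists p.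
Qed.

Lemma finitely_covered_bigcup n (S : 'I_n -> set L) :
  (forall k, finitely_covered O (S k)) -> finitely_covered O [set p | exists k, S k p].
Proof.
move=> hS.
have /choice[F hF] : forall k, exists F : {m : nat & 'I_m -> I},
    forall p, S k p -> exists j, O (projT2 F j) p.
  by move=> k; have [m [f hf]] := hS k; exists (existT _ m f).
pose T : finType := {k : 'I_n & 'I_(projT1 (F k))}.
exists #|T|, (fun j => let x := enum_val j in projT2 (F (tag x)) (tagged x)).
move=> p [k /(hF k)[j hj]].
by exists (enum_rank (Tagged (fun k => 'I_(projT1 (F k))) j)); rewrite /= enum_rankK.
Qed.

Lemma totally_bounded_refine A S s : totally_bounded A -> S `<=` A ->
  ~ finitely_covered O S -> 0 < s -> exists c, ~ finitely_covered O (S `&` U s c).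
Proof.
move=> Atb SA nS s0; apply: contrapT => allc; apply: nS.
have [n [f hf]] := Atb s s0.
apply: finitely_covered_sub (finitely_covered_bigcup (S := fun k => S `&` U s (f k)) _).
  by move=> p Sp; have [k hk] := hf p (SA p Sp); exists k.
by move=> k; apply: contrapT => nk; apply: allc; exists (f k).
Qed.

Lemma not_finitely_covered_nested A : totally_bounded A -> ~ finitely_covered O A ->
  exists S : nat -> set L, [/\ forall i, S i `<=` A, forall i, ~ finitely_covered O (S i),
    forall i j, (i <= j)%N -> S j `<=` S i &
    forall i, exists c, S i.+1 `<=` U (halfpow i.+1) c].
Proof.
move=> Atb nA.
have [S [_ hS]] : exists S : nat -> set L, S 0%N = A /\ forall i,
    (S i `<=` A /\ ~ finitely_covered O (S i)) /\
    (S i.+1 `<=` S i /\ exists c, S i.+1 `<=` U (halfpow i.+1) c).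
  apply: (@chain_from _ (fun _ X => X `<=` A /\ ~ finitely_covered O X)
    (fun i X Y => Y `<=` X /\ exists c, Y `<=` U (halfpow i.+1) c)) => [|i X [XA nX]].
    by split.
  have [c nc] := totally_bounded_refine Atb XA nX (halfpow_gt0 i.+1).
  exists (X `&` U (halfpow i.+1) c); split; first by split=> // p [/XA].
  by split=> [p []|]; last exists c => p [].
exists S; split=> [i|i|i j|i]; last by case: (hS i) => _ [].
- by case: (hS i) => -[].
- by case: (hS i) => -[].
- apply: (homo_leq (r := fun X Y => Y `<=` X)) => [X //|Y X Z YX ZY p /ZY /YX //|k].
  by case: (hS k) => _ [].
Qed.

End Covering.

Lemma complete_totally_bounded_compact A : s_complete nu -> s_closed nu A ->
  totally_bounded A -> s_compact nu A.
Proof.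
move=> complete Acl Atb I O Oopen cover; apply: contrapT => nA.
have [S [SA nS Sdec Ssmall]] := not_finitely_covered_nested Atb nA.
have /choice[x Sx] : forall i, exists y, S i.+1 y.
  by move=> i; apply: finitely_covered_neq0 (nS i.+1).
have x_near i y : S i.+1 y -> U (halfpow i) (x i) y.
  move=> Sy; have [c Sc] := Ssmall i; have ei := halfpow_gt0 i.+1.
  have := Unbh_trans ei ei (Unbh_sym (ltW ei) (Sc _ (Sx i))) (Sc _ Sy).
  by apply: Unbh_le; rewrite halfpowS; lra.
have [z xz] := complete x
  (s_cauchy_halfpow (fun i j ij => x_near i _ (Sdec i.+1 j.+1 ij _ (Sx j)))).
have Az : A z.
  apply: Acl => t /xz[N hN]; exists (x N); first exact: SA _ (Sx N).
  exact: hN N (leqnn N).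
have [i0 Oz] := cover z Az; have [r r0 hr] := Oopen i0 z Oz.
have r2 : 0 < r / 2 by lra.
have [N hN] := xz _ r2; have [k hk] := halfpow_lt r2.
apply: (nS (maxn N k).+1); exists 1%N, (fun=> i0) => y Sy; exists ord0; apply: hr.
apply: Unbh_le (Unbh_trans r2 (halfpow_gt0 _) (hN _ (leq_maxl N k)) (x_near _ _ Sy)).
by have := halfpow_le (leq_maxr N k); lra.
Qed.

Lemma Pkc_H_complete : s_complete nu -> H_complete nu (Pkc nu).
Proof.
move=> complete An PAn AnC.
have An0 n : An n !=set0 by case: (PAn n).
have [A0 AnA] := lower_limit_H_limit complete An0 AnC.
have Antb n : totally_bounded (An n) by case: (PAn n) => _ /s_compact_totally_bounded.
exists (lower_limit An) => //; split=> //.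
  exact: (complete_totally_bounded_compact complete (@lower_limit_closed An)
    (H_cvg_totally_bounded Antb An0 AnA)).
by apply: lower_limit_convex => n; case: (PAn n).
Qed.

End MengerSpace.

Section Serstnev.
Variables (R : realType) (L : lmodType R) (nu : L -> R -> R)
  (tau : (R -> R) -> (R -> R) -> (R -> R)).
Hypothesis nu_tau : serstnev_RNS nu tau.

Lemma serstnev_nu_range p x : 0 <= nu p x <= 1.
Proof. by case: nu_tau => _ _ _ [/(_ p)[[]]]. Qed.

Lemma serstnev_nu_homo p : {homo nu p : x y / x <= y}.
Proof. by case: nu_tau => _ _ _ [/(_ p)[[]]]. Qed.

Lemma serstnev_nu0 x : 0 < x -> nu 0 x = 1.
Proof. by case: nu_tau => _ _ _ [_ /(_ 0)[_ ->] // _ _ x0]; rewrite /eps0 x0. Qed.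

Lemma serstnev_nu_scale a p x : a != 0 -> 0 <= x -> nu (a *: p) x = nu p (x / `|a|).
Proof. by case: nu_tau => _ _ _ [_ _ + _]; apply. Qed.

Lemma serstnev_nu_add (tau_ge_sup_min : forall F G x, Dplus F -> Dplus G -> 0 <= x ->
    sup [set Num.min (F (t * x)) (G ((1 - t) * x)) | t in [set t : R | 0 <= t <= 1]]
      <= tau F G x)
  p q x y : 0 < x -> 0 < y -> Num.min (nu p x) (nu q y) <= nu (p + q) (x + y).
Proof.
case: nu_tau => _ _ _ [nuD _ _ nu_tri] x0 y0; have xy0 : 0 < x + y by lra.
apply: le_trans (nu_tri p q (x + y)).
apply: le_trans (tau_ge_sup_min _ _ _ (nuD p) (nuD q) (ltW xy0)).
apply: ub_le_sup.
  exists 1 => _ [t _ <-]; rewrite ge_min.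
  by case/andP: (serstnev_nu_range p (t * (x + y))) => _ ->.
exists (x / (x + y)).
  apply/andP; split; first by rewrite divr_ge0 ?ltW.
  by rewrite ler_pdivrMr // mul1r lerDl ltW.
by rewrite mulrBl mul1r divfK ?gt_eqF // addrC addKr.
Qed.

End Serstnev.

Theorem theorem4p9 (R : realType) (L : lmodType R) (nu : L -> R -> R)
    (tau : (R -> R) -> (R -> R) -> (R -> R)) :
  serstnev_RNS nu tau ->
  sup_continuous tau ->
  (forall (F G : R -> R) (x : R), Dplus F -> Dplus G -> 0 <= x ->
     sup [set Num.min (F (t * x)) (G ((1 - t) * x)) | t in [set t : R | 0 <= t <= 1]]
       <= tau F G x) ->
  [/\ H_closed_in_Pf nu (Pfc nu),
      (s_complete nu -> H_complete nu (Pfc nu)) &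
      (s_complete nu -> H_complete nu (Pkc nu))].
Proof.
move=> nu_tau _ tau_ge_sup_min.
have nu_range := serstnev_nu_range nu_tau.
have nu_homo := serstnev_nu_homo nu_tau.
have nu0 := serstnev_nu0 nu_tau.
have nu_scale := serstnev_nu_scale nu_tau.
have nu_add := serstnev_nu_add nu_tau tau_ge_sup_min.
by split; [apply: Pfc_H_closed | apply: Pfc_H_complete | apply: Pkc_H_complete].
Qed.
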